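(* Let $\delta\in(0,1/2)$, $\beta\in(0,1]$, and let $\mu\ge 0$, $\nu\ge 1$ be constants. Let $\mathcal A$ be an online bin packing algorithm such that on every input list $J$: (i) all bins in its packing that contain only small items, except at most $\mu$ of them, have total size at least $1-\delta$; and (ii) the number of bins in its packing containing at least one large item is at most $\nu|J_\ell|$ (where $J_\ell$ is the set of large items of $J$). Let $I$ be a list of $n$ items drawn independently from a common distribution on $(0,1]$ and let $J$ be the prefix of $I$ of length $\beta n$. Then, with probability tending to $1$ as $\mathbb E[\mathrm{Opt}(I)]\to\infty$, $$\mathcal A(J)\le \frac{2\beta\nu}{\delta(1-\delta)}\,\mathbb E[\mathrm{Opt}(I)]+o\big(\mathbb E[\mathrm{Opt}(I)]\big).$$
   Context: $\mathrm{Opt}(L)$ is the minimum number of unit-capacity bins needed to pack list $L$ and $\mathcal A(L)$ the number of bins used by $\mathcal A$. An item is large if its size is at least $\delta$ and small otherwise. *)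

From HB Require Import structures.
From mathcomp Require Import all_boot all_order all_algebra.
From mathcomp Require Import all_classical all_reals all_analysis.
Set Implicit Arguments. Unset Strict Implicit. Unset Printing Implicit Defensive.
Import Order.TTheory GRing.Theory Num.Theory.
Local Open Scope classical_set_scope.
Local Open Scope ring_scope.

Section BinPacking.
Variable R : realType.

(* A list of items is a seq R; a packing of L is a map f : nat -> nat
   assigning item i (i < size L) to bin f i. *)
Definition items_ok (L : seq R) : bool := all (fun x => 0 < x <= 1) L.

Definition load (L : seq R) (f : nat -> nat) (b : nat) : R :=
  \sum_(0 <= i < size L | f i == b) L`_i.

Definition valid_packing (L : seq R) (f : nat -> nat) : Prop :=
  forall b, load L f b <= 1.

Definition packable (L : seq R) (k : nat) : Prop :=
  exists f : nat -> nat,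
    (forall i, (i < size L)%N -> (f i < k)%N) /\ valid_packing L f.

Lemma packable_ex_bool (L : seq R) :
  (exists k, packable L k) -> exists k, `[< packable L k >].
Proof. by move=> [k Hk]; exists k; apply/asboolP. Qed.

(* Opt(L): minimum number of unit-capacity bins needed to pack L
   (0 by convention if L is not packable, which never happens for items in (0,1]) *)
Definition Opt (L : seq R) : nat :=
  match pselect (exists k, packable L k) with
  | left h => ex_minn (packable_ex_bool h)
  | right _ => 0%N
  end.

(* An (online) algorithm: alg L i is the bin to which item i of input L is assigned. *)
Definition bins_used (alg : seq R -> nat -> nat) (L : seq R) : seq nat :=
  undup [seq alg L i | i <- iota 0 (size L)].

Definition nbins (alg : seq R -> nat -> nat) (L : seq R) : nat :=
  size (bins_used alg L).

Definition bin_items (L : seq R) (f : nat -> nat) (b : nat) : seq R :=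
  [seq L`_i | i <- [seq i <- iota 0 (size L) | f i == b]].

Definition online_algorithm (alg : seq R -> nat -> nat) : Prop :=
  (forall L, items_ok L -> valid_packing L (alg L)) /\
  (forall L t i, (i < size L)%N -> alg (L ++ t) i = alg L i).

Definition is_small (delta x : R) : bool := x < delta.
Definition is_large (delta x : R) : bool := delta <= x.

Definition condition_i (delta mu : R) (alg : seq R -> nat -> nat) : Prop :=
  forall L, items_ok L ->
    (count (fun b => all (is_small delta) (bin_items L (alg L) b)
                     && (load L (alg L) b < 1 - delta))
           (bins_used alg L))%:R <= mu.

Definition condition_ii (delta nu : R) (alg : seq R -> nat -> nat) : Prop :=
  forall L, items_ok L ->
    (count (fun b => has (is_large delta) (bin_items L (alg L) b))
           (bins_used alg L))%:R
    <= nu * (count (is_large delta) L)%:R.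

Definition beta_prefix (beta : R) (L : seq R) : seq R :=
  take (Num.truncn (beta * (size L)%:R)) L.

End BinPacking.

Section Random.
Local Open Scope ereal_scope.
Variables (R : realType) (d : measure_display) (T : measurableType d).

Definition iid_items (P : probability T R) (X : nat -> T -> R) (n : nat) : Prop :=
  (forall i, measurable_fun setT (X i)) /\
  (forall i w, (0 < X i w <= 1)%R) /\
  (forall i (B : set R), measurable B -> P (X i @^-1` B) = P (X 0%N @^-1` B)) /\
  (forall B : nat -> set R, (forall i, measurable (B i)) ->
     P (\bigcap_(i in [set k | (k < n)%N]) (X i @^-1` B i))
     = \prod_(i < n) P (X i @^-1` B i)).

Definition rand_list (X : nat -> T -> R) (n : nat) (w : T) : seq R :=
  [seq X i w | i <- iota 0 n].

Definition EOpt (P : probability T R) (X : nat -> T -> R) (n : nat) : \bar R :=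
  \int[P]_w ((Opt (rand_list X n w))%:R)%:E.

End Random.

(* Deterministically, (i) and (ii) give A(J) <= mu + (1/(1-delta) + nu/delta) s(J), where
   s(J) is the total size of J: a bin without large items is one of the mu exceptions or has
   load at least 1 - delta, and at most nu |J_l| <= nu s(J) / delta bins contain a large item.
   As s(I) <= Opt(I) and 1/(1-delta) + nu/delta <= 2 nu / (delta (1 - delta)), it remains to
   show that s(J) exceeds beta E[Opt(I)] by more than o(E[Opt(I)]) only with small
   probability. This is Chebyshev's inequality, since the variance of a sum of pairwise
   uncorrelated [0,1]-valued variables is at most its mean. To obtain uncorrelatedness from
   the product rule defining independence, each item is rounded down to the grid (1/n)N: it
   then becomes a combination of indicators of preimages of intervals, and the rounding
   changes s(J) by at most 1. *)

From HB Require Import structures.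
From mathcomp Require Import all_boot all_order all_algebra.
From mathcomp Require Import all_classical all_reals all_analysis.
From mathcomp Require Import zify ring lra.
Set Implicit Arguments. Unset Strict Implicit. Unset Printing Implicit Defensive.
Import Order.TTheory GRing.Theory Num.Theory.
Local Open Scope classical_set_scope.
Local Open Scope ring_scope.

Lemma sum_nat_eq_pred1 (R : pzSemiRingType) k i (F : nat -> R) : (i < k)%N ->
  \sum_(0 <= j < k) (i == j)%:R * F j = F i.
Proof.
move=> ik; rewrite (bigD1_seq i) ?mem_iota ?iota_uniq ?add0n ?subn0 //.
have -> : (i == i) = true by apply/eqP.
rewrite mul1r big1; first exact: addr0.
move=> j ji.
have -> : (i == j) = false by apply/eqP => ij; rewrite ij eqxx in ji.
by rewrite mul0r.
Qed.

Lemma sum_nat_ltn (R : pzSemiRingType) m n :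
  \sum_(0 <= l < n) (l < m)%N%:R = (minn m n)%:R :> R.
Proof.
elim: n => [|n IH]; first by rewrite big_geq // minn0.
by rewrite big_nat_recr //= IH -natrD; congr (_%:R); case: (ltnP n m) => /=; lia.
Qed.

Lemma count_mulr_le_sum (R : numDomainType) I (s : seq I) (a : pred I) (F : I -> R) c :
  (forall x, a x -> c <= F x) -> (count a s)%:R * c <= \sum_(x <- s | a x) F x.
Proof.
move=> cF; elim: s => [|x s IH]; first by rewrite big_nil mul0r.
rewrite big_cons /=; case: ifP => ax //=.
by rewrite natrD mulrDl mul1r lerD // cF.
Qed.

Section BoundedMean.
Context d (T : measurableType d) (R : realType) (P : probability T R).
Local Hint Resolve measurableT : core.

Definition bounded_mfun (f : T -> R) : Prop :=
  measurable_fun setT f /\ exists M : R, forall w, `|f w| <= M.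

(* Meaningful for bounded measurable [f] only: [fine] maps an infinite integral to 0. *)
Definition mean (f : T -> R) : R := fine (\int[P]_w (f w)%:E).

Lemma bounded_mfun_integrable f : bounded_mfun f -> P.-integrable setT (EFin \o f).
Proof.
move=> [mf [M hM]]; apply: measurable_bounded_integrable => //.
  by apply: le_lt_trans (probability_le1 P measurableT) _; rewrite ltry.
exists M; split; first exact: num_real.
by move=> x Mx w _; apply: le_trans (hM w) _; apply: ltW.
Qed.

Lemma integral_mean f : bounded_mfun f -> (\int[P]_w (f w)%:E)%E = (mean f)%:E.
Proof.
move=> bf; rewrite /mean fineK //.
exact: (integrable_fin_num measurableT (bounded_mfun_integrable bf)).
Qed.

Lemma bounded_mfun_cst c : bounded_mfun (fun _ => c).
Proof. by split; [exact: measurable_cst | exists `|c|]. Qed.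

Lemma bounded_mfun_indic A : measurable A -> bounded_mfun (\1_A).
Proof.
move=> mA; split; first exact: measurable_realfun.measurable_indic.
by exists 1 => w; rewrite indicE; case: (w \in A); rewrite ?normr0 ?normr1.
Qed.

Lemma bounded_mfunD f g :
  bounded_mfun f -> bounded_mfun g -> bounded_mfun (fun w => f w + g w).
Proof.
move=> [mf [M hM]] [mg [N hN]]; split; first exact: measurable_realfun.measurable_funD.
by exists (M + N) => w; apply: le_trans (ler_normD _ _) _; apply: lerD.
Qed.

Lemma bounded_mfunM f g :
  bounded_mfun f -> bounded_mfun g -> bounded_mfun (fun w => f w * g w).
Proof.
move=> [mf [M hM]] [mg [N hN]]; split; first exact: measurable_realfun.measurable_funM.
by exists (M * N) => w; rewrite normrM; apply: ler_pM.
Qed.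

Lemma bounded_mfunZ c f : bounded_mfun f -> bounded_mfun (fun w => c * f w).
Proof. exact/bounded_mfunM/bounded_mfun_cst. Qed.

Lemma bounded_mfun_sum I (s : seq I) (F : I -> T -> R) :
  (forall i, bounded_mfun (F i)) -> bounded_mfun (fun w => \sum_(i <- s) F i w).
Proof.
move=> bF; elim: s => [|i s IH].
  by under eq_fun do rewrite big_nil; exact: bounded_mfun_cst.
by under eq_fun do rewrite big_cons; exact: bounded_mfunD.
Qed.

Lemma mean_cst c : mean (fun _ => c) = c.
Proof.
rewrite /mean integral_cst //; transitivity (fine (c%:E * 1%E)); last by rewrite mule1.
by rewrite -(probability_setT P).
Qed.

Lemma mean_indic A : measurable A -> mean (\1_A) = fine (P A).
Proof. by move=> mA; rewrite /mean integral_indic // setIT. Qed.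

Lemma meanD f g : bounded_mfun f -> bounded_mfun g ->
  mean (fun w => f w + g w) = mean f + mean g.
Proof.
move=> bf bg; rewrite /mean.
rewrite (_ : (fun w => _) = (EFin \o f) \+ (EFin \o g))%E; last exact/funext.
rewrite integralD_EFin //; try exact: bounded_mfun_integrable.
by rewrite !integral_mean.
Qed.

Lemma meanZ c f : bounded_mfun f -> mean (fun w => c * f w) = c * mean f.
Proof.
move=> bf; rewrite /mean; under eq_integral do rewrite EFinM.
by rewrite integralZl ?integral_mean //; exact: bounded_mfun_integrable.
Qed.

Lemma mean_sum I (s : seq I) (F : I -> T -> R) : (forall i, bounded_mfun (F i)) ->
  mean (fun w => \sum_(i <- s) F i w) = \sum_(i <- s) mean (F i).
Proof.
move=> bF; elim: s => [|i s IH].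
  by under eq_fun do rewrite big_nil; rewrite big_nil mean_cst.
under eq_fun do rewrite big_cons.
by rewrite big_cons meanD ?IH //; exact: bounded_mfun_sum.
Qed.

Lemma ler_mean f g : bounded_mfun f -> bounded_mfun g ->
  (forall w, f w <= g w) -> mean f <= mean g.
Proof.
move=> bf bg fg; rewrite -lee_fin -!integral_mean //.
by apply: le_integral => //; try exact: bounded_mfun_integrable; move=> w _; rewrite lee_fin.
Qed.

Lemma chebyshev_mean f a t : bounded_mfun f -> 0 < t ->
  t ^+ 2 * fine (P (f @^-1` `[a + t, +oo[)) <= mean (fun w => (f w - a) ^+ 2).
Proof.
move=> bf t0.
have mB : measurable (f @^-1` `[a + t, +oo[).
  by rewrite -[_ @^-1` _]setTI; apply: bf.1 => //; exact: measurable_itv.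
rewrite -mean_indic // -meanZ; last exact: bounded_mfun_indic.
apply: ler_mean; first exact/bounded_mfunZ/bounded_mfun_indic.
  by apply: bounded_mfunM; apply: bounded_mfunD => //; exact: bounded_mfun_cst.
move=> w; rewrite indicE; case: (boolP (w \in _)) => [/set_mem|_]; last first.
  by rewrite mulr0 sqr_ge0.
rewrite /= in_itv /= andbT => ft.
by rewrite mulr1 ler_sqr ?nnegrE; lra.
Qed.

End BoundedMean.

(* [Opt] of a random list need not be measurable, hence the comparison of upper integrals. *)
Lemma ge0_le_integral_nonmeasurable d (T : measurableType d) (R : realType)
    (mu : measure T R) (f g : T -> \bar R) :
  (forall w, (0 <= f w)%E) -> (forall w, (f w <= g w)%E) ->
  (\int[mu]_w f w <= \int[mu]_w g w)%E.
Proof.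
move=> f0 fg; have g0 w : (0 <= g w)%E := le_trans (f0 w) (fg w).
rewrite !ge0_integralTE //; apply: ereal_sup_le => _ [h hf <-]; exists h => //.
by move=> w; exact: le_trans (hf w) (fg w).
Qed.

Section UncorrelatedSum.
Context d (T : measurableType d) (R : realType) (P : probability T R).
Variables (Y : nat -> T -> R) (k : nat) (q : R).
Hypothesis bY : forall i, bounded_mfun (Y i).
Hypothesis Y01 : forall i w, 0 <= Y i w <= 1.
Hypothesis meanY : forall i, (i < k)%N -> mean P (Y i) = q.
Hypothesis meanYY : forall i j, (i < k)%N -> (j < k)%N -> i != j ->
  mean P (fun w => Y i w * Y j w) = q * q.

Let S w := \sum_(0 <= i < k) Y i w.

Lemma mean_partial_sum : mean P S = k%:R * q.
Proof.
rewrite mean_sum // big_nat_cond (eq_bigr (fun=> q)); last first.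
  by move=> i /andP[/andP[_ ik] _]; exact: meanY.
by rewrite -big_nat_cond sumr_const_nat subn0 mulr_natl.
Qed.

Lemma mean_sqr_partial_sum_le : mean P (fun w => S w ^+ 2) <= (k%:R * q) ^+ 2 + k%:R * q.
Proof.
have -> : (fun w => S w ^+ 2) =
    (fun w => \sum_(0 <= i < k) \sum_(0 <= j < k) Y i w * Y j w).
  by apply/funext => w; rewrite expr2 /S big_distrl; under eq_bigr do rewrite big_distrr.
rewrite mean_sum; last by move=> i; apply: bounded_mfun_sum => j; exact: bounded_mfunM.
apply: (@le_trans _ _ (\sum_(0 <= i < k) \sum_(0 <= j < k) (q * q + (i == j)%:R * q))).
  rewrite big_nat_cond [leRHS]big_nat_cond; apply: ler_sum => i /andP[/andP[_ ik] _].
  rewrite mean_sum; last by move=> j; exact: bounded_mfunM.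
  rewrite big_nat_cond [leRHS]big_nat_cond; apply: ler_sum => j /andP[/andP[_ jk] _].
  have [<-|ij] := eqVneq i j; last by rewrite meanYY // mul0r addr0.
  have q0 : 0 <= q by rewrite -(meanY ik) -(mean_cst P 0); apply: ler_mean => //;
    [exact: bounded_mfun_cst | by move=> w; case/andP: (Y01 i w)].
  rewrite mul1r -(meanY ik); apply: (@le_trans _ _ (mean P (Y i))); last first.
    by rewrite (meanY ik) lerDr mulr_ge0.
  apply: ler_mean => //; first exact: bounded_mfunM.
  by move=> w; case/andP: (Y01 i w) => Y0 Y1; rewrite -[leRHS]mulr1 ler_wpM2l.
under eq_bigr => i _ do rewrite big_split /= sumr_const_nat subn0.
rewrite big_split /= sumr_const_nat subn0.
rewrite [X in _ + X <= _](@eq_big_nat _ _ _ 0 k _ (fun _ => q)); last first.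
  by move=> i /andP[_ ik]; rewrite (sum_nat_eq_pred1 (fun=> q)).
rewrite sumr_const_nat subn0 -mulrnA -[_ *+ (k * k)]mulr_natl -[q *+ k]mulr_natl.
by rewrite natrM expr2 mulrACA.
Qed.

Lemma variance_partial_sum_le : mean P (fun w => (S w - k%:R * q) ^+ 2) <= k%:R * q.
Proof.
set a := k%:R * q.
have -> : (fun w => (S w - a) ^+ 2) = (fun w => S w ^+ 2 + (- (2 * a) * S w + a ^+ 2)).
  by apply/funext => w; rewrite sqrrB; ring.
have bS : bounded_mfun S by exact: bounded_mfun_sum.
rewrite meanD; last 2 first.
- exact: bounded_mfunM.
- exact/bounded_mfunD/bounded_mfun_cst/bounded_mfunZ.
rewrite meanD; [|exact: bounded_mfunZ|exact: bounded_mfun_cst].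
rewrite meanZ // mean_cst mean_partial_sum -/a.
have := mean_sqr_partial_sum_le; rewrite -/a; lra.
Qed.

End UncorrelatedSum.

Lemma iid_items_pair_indep d (T : measurableType d) (R : realType) (P : probability T R)
    (X : nat -> T -> R) n i j (A B : set R) :
  iid_items P X n -> (i < n)%N -> (j < n)%N -> i != j ->
  measurable A -> measurable B ->
  P (X i @^-1` A `&` X j @^-1` B) = (P (X i @^-1` A) * P (X j @^-1` B))%E.
Proof.
move=> [_ [_ [_ indep]]] ilt jlt ij mA mB.
pose C m := if m == i then A else if m == j then B else setT.
have mC m : measurable (C m) by rewrite /C; case: ifP => // _; case: ifP.
have -> : X i @^-1` A `&` X j @^-1` B = \bigcap_(m in [set k | (k < n)%N]) X m @^-1` C m.
  apply/seteqP; split => [w [XiA XjB] m _|w XC]; last first.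
    split; first by have := XC i ilt; rewrite /C eqxx.
    by have := XC j jlt; rewrite /C eqxx eq_sym (negbTE ij).
  by rewrite /C /preimage /=; case: eqP => [->//|_]; case: eqP => [->//|].
rewrite indep // (bigD1 (Ordinal ilt)) //= (bigD1 (Ordinal jlt)) /=; last first.
  by apply/eqP => -[] /eqP; rewrite eq_sym (negbTE ij).
rewrite big1 ?mule1; first by rewrite /C eqxx eq_sym (negbTE ij) eqxx.
move=> m /andP[mi mj]; rewrite /C.
have -> : (nat_of_ord m == i) = false by apply: contraNF mi => /eqP mi; apply/eqP/val_inj.
have -> : (nat_of_ord m == j) = false by apply: contraNF mj => /eqP mj; apply/eqP/val_inj.
by rewrite preimage_setT; exact: probability_setT.
Qed.

Section GridRounding.
Context d (T : measurableType d) (R : realType) (P : probability T R).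
Variables (X : nat -> T -> R) (n : nat).
Hypothesis hX : iid_items P X n.
Hypothesis n_gt0 : (0 < n)%N.
Local Hint Resolve measurableT : core.

Definition grid_event i l : set T := X i @^-1` `[l.+1%:R / n%:R, +oo[.

Definition grid_item i w : R := n%:R^-1 * \sum_(0 <= l < n) \1_(grid_event i l) w.

Lemma measurable_grid_event i l : measurable (grid_event i l).
Proof. by rewrite -[grid_event i l]setTI; apply: hX.1 => //; exact: measurable_itv. Qed.

Lemma grid_itemE i w : grid_item i w = (Num.truncn (n%:R * X i w))%:R / n%:R.
Proof.
have n_pos : (0 : R) < n%:R by rewrite ltr0n.
have /andP[X0 X1] := hX.2.1 i w.
have nX0 : 0 <= n%:R * X i w by rewrite mulr_ge0 // ltW.
have le_n : (Num.truncn (n%:R * X i w) <= n)%N.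
  rewrite truncn_le_nat; apply: le_lt_trans (_ : n%:R < n.+1%:R); last by rewrite ltr_nat.
  by rewrite -[leRHS]mulr1 ler_wpM2l // ltW.
rewrite /grid_item mulrC -[X in X%:R / _](minn_idPl le_n) -sum_nat_ltn.
congr (_ * _); apply: eq_bigr => l _; rewrite indicE truncn_ge_nat //.
have -> : (w \in grid_event i l) = (l.+1%:R / n%:R <= X i w).
  by apply/idP/idP => [/set_mem|h]; last apply/mem_set; rewrite /grid_event /= in_itv /= andbT.
by rewrite ler_pdivrMr // mulrC.
Qed.

Lemma grid_item_bounds i w :
  [/\ 0 <= grid_item i w, grid_item i w <= X i w & X i w <= grid_item i w + n%:R^-1].
Proof.
have n_pos : (0 : R) < n%:R by rewrite ltr0n.
have /andP[X0 _] := hX.2.1 i w.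
have nX0 : 0 <= n%:R * X i w by rewrite mulr_ge0 // ltW.
have /andP[lo hi] := truncn_itv nX0.
rewrite grid_itemE; split; first by rewrite divr_ge0.
  by rewrite ler_pdivrMr // [X _ _ * _]mulrC.
rewrite -[X in _ + X]mul1r -mulrDl ler_pdivlMr // [X _ _ * _]mulrC.
by rewrite -natr1 in hi; exact: ltW.
Qed.

Lemma bounded_mfun_grid_item i : bounded_mfun (grid_item i).
Proof.
apply: bounded_mfunZ; apply: bounded_mfun_sum => l.
exact/bounded_mfun_indic/measurable_grid_event.
Qed.

Lemma mean_grid_itemE i :
  mean P (grid_item i) = n%:R^-1 * \sum_(0 <= l < n) fine (P (grid_event i l)).
Proof.
rewrite meanZ; last by apply: bounded_mfun_sum => l; exact/bounded_mfun_indic/measurable_grid_event.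
rewrite mean_sum; last by move=> l; exact/bounded_mfun_indic/measurable_grid_event.
by congr (_ * _); apply: eq_bigr => l _; rewrite mean_indic //; exact: measurable_grid_event.
Qed.

Lemma mean_grid_item i : mean P (grid_item i) = mean P (grid_item 0).
Proof.
rewrite !mean_grid_itemE; congr (_ * _); apply: eq_bigr => l _.
by rewrite /grid_event hX.2.2.1 //; exact: measurable_itv.
Qed.

Lemma mean_grid_itemM i j : (i < n)%N -> (j < n)%N -> i != j ->
  mean P (fun w => grid_item i w * grid_item j w) = mean P (grid_item i) * mean P (grid_item j).
Proof.
move=> ilt jlt ij.
have mG l l' : measurable (grid_event i l `&` grid_event j l').
  by apply: measurableI; exact: measurable_grid_event.
have bG l : bounded_mfun (fun w => \sum_(0 <= l' < n) \1_(grid_event i l `&` grid_event j l') w : R)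
  by apply: bounded_mfun_sum => l'; exact: bounded_mfun_indic.
have -> : (fun w => grid_item i w * grid_item j w) = (fun w => n%:R^-1 * \sum_(0 <= l < n)
    (n%:R^-1 * \sum_(0 <= l' < n) \1_(grid_event i l `&` grid_event j l') w)).
  apply/funext => w; rewrite /grid_item -mulrA; congr (_ * _).
  rewrite big_distrl /=; apply: eq_bigr => l _; rewrite mulrCA big_distrr /=.
  by congr (_ * _); apply: eq_bigr => l' _; rewrite indicI.
rewrite meanZ; last by apply: bounded_mfun_sum => l; exact: bounded_mfunZ.
rewrite mean_sum; last by move=> l; exact: bounded_mfunZ.
rewrite !mean_grid_itemE -mulrA big_distrl /=; congr (_ * _); apply: eq_bigr => l _.
rewrite meanZ // mean_sum; last by move=> l'; exact: bounded_mfun_indic.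
rewrite mulrCA; congr (_ * _); rewrite big_distrr /=; apply: eq_bigr => l' _.
rewrite mean_indic // /grid_event (iid_items_pair_indep hX ilt jlt ij) //;
  try exact: measurable_itv.
by rewrite fineM //; apply: fin_num_measure; exact: measurable_grid_event.
Qed.

End GridRounding.

Section Packing.
Variable R : realType.
Implicit Types (L : seq R) (f : nat -> nat).

Lemma loadE L f b : load L f b = \sum_(0 <= i < size L) (f i == b)%:R * L`_i.
Proof.
by rewrite /load big_mkcond; apply: eq_bigr => i _; case: (f i == b); rewrite ?mul1r ?mul0r.
Qed.

Lemma items_ok_nth L i : items_ok L -> 0 <= L`_i <= 1.
Proof.
move=> okL; case: (ltnP i (size L)) => iL; last by rewrite nth_default // lexx ler01.
by have /allP /(_ _ (mem_nth 0 iL)) /andP[/ltW -> ->] := okL.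
Qed.

Lemma load_ge0 L f b : items_ok L -> 0 <= load L f b.
Proof. by move=> okL; apply: sumr_ge0 => i _; case/andP: (items_ok_nth i okL). Qed.

(* Distinct bins hold disjoint sets of items. *)
Lemma sum_load_le L f (s : seq nat) : uniq s -> items_ok L ->
  \sum_(b <- s) load L f b <= \sum_(x <- L) x.
Proof.
move=> us okL; under eq_bigr do rewrite loadE.
rewrite [leRHS](big_nth 0) exchange_big /=; apply: ler_sum => i _.
have [Li0 _] := andP (items_ok_nth i okL).
have -> : \sum_(b <- s) (f i == b)%:R * L`_i = (count_mem (f i) s)%:R * L`_i.
  elim: s {us} => [|b s IH]; first by rewrite big_nil mul0r.
  by rewrite big_cons IH /= natrD mulrDl eq_sym.
by rewrite count_uniq_mem //; case: (f i \in s); rewrite ?mul1r ?mul0r.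
Qed.

Lemma count_large_le delta L : 0 < delta -> items_ok L ->
  delta * (count (is_large delta) L)%:R <= \sum_(x <- L) x.
Proof.
move=> delta_gt0; elim: L => [|x L IH] /=; first by rewrite big_nil mulr0.
move=> /andP[/andP[x_gt0 _] okL]; rewrite big_cons natrD mulrDr lerD ?IH //.
by rewrite /is_large; case: (leP delta x) => /= h; rewrite ?mulr1 ?mulr0 // ltW.
Qed.

Lemma nbins_le alg delta mu nu L : 0 < delta < 1 -> 0 <= nu ->
  condition_i delta mu alg -> condition_ii delta nu alg -> items_ok L ->
  (nbins alg L)%:R <= mu + ((1 - delta)^-1 + nu / delta) * \sum_(x <- L) x.
Proof.
move=> /andP[delta_gt0 delta_lt1] nu_ge0 condi condii okL.
set S := \sum_(x <- L) x; set s := bins_used alg L.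
set large := fun b => has (is_large delta) (bin_items L (alg L) b).
set light := fun b => load L (alg L) b < 1 - delta.
have small_light : (count (predI light (predC large)) s)%:R <= mu.
  apply: le_trans (condi L okL); rewrite ler_nat; apply/eq_leq/eq_count => b.
  rewrite /= andbC /large -all_predC; congr (_ && _); apply: eq_all => x.
  by rewrite /is_small /is_large /= ltNge.
have large_bins : (count large s)%:R <= nu / delta * S.
  apply: le_trans (condii L okL) _; rewrite -mulrA ler_wpM2l //.
  by rewrite ler_pdivlMl // count_large_le.
set heavy := predI (predC light) (predC large).
have heavy_load : (count heavy s)%:R * (1 - delta) <= S.
  have := count_mulr_le_sum s (F := load L (alg L)) (c := 1 - delta) (a := heavy).
  move=> /(_ _) le_sum; apply: le_trans (le_sum _) _.
    by move=> b /andP[]; rewrite /= -leNgt.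
  apply: le_trans (sum_load_le (alg L) (undup_uniq _ : uniq s) okL).
  rewrite [leRHS](bigID heavy) lerDl sumr_ge0 // => b _.
  exact: load_ge0.
have heavy_bins : (count heavy s)%:R <= (1 - delta)^-1 * S.
  by rewrite mulrC ler_pdivlMr ?subr_gt0.
have size_s : size s =
    (count large s + (count (predI light (predC large)) s + count heavy s))%N.
  rewrite -(count_predC large) -[count (predC large) s]size_filter.
  by rewrite -(count_predC light (seq.filter (predC large) s)) !count_filter.
rewrite /nbins -/s size_s !natrD mulrDl; lra.
Qed.

Lemma packable_size L : items_ok L -> packable L (size L).
Proof.
move=> okL; exists id; split=> // b; rewrite loadE.
have [bL | Lb] := ltnP b (size L).
  under eq_bigr do rewrite eq_sym.
  by rewrite sum_nat_eq_pred1 //; case/andP: (items_ok_nth b okL).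
rewrite big_nat big1 // => i /andP[_ iL].
by rewrite (_ : i == b = false) ?mul0r //; apply: contraTF iL => /eqP ->; rewrite -leqNgt.
Qed.

Lemma packable_Opt L : items_ok L -> packable L (Opt L).
Proof.
move=> okL; rewrite /Opt; case: pselect => [pk | npk]; last first.
  by exfalso; apply: npk; exists (size L); exact: packable_size.
by case: ex_minnP => k /asboolP.
Qed.

Lemma sum_le_Opt L : items_ok L -> \sum_(x <- L) x <= (Opt L)%:R.
Proof.
move=> okL; have [f [f_lt valid]] := packable_Opt okL.
have -> : \sum_(x <- L) x =
    \sum_(0 <= b < Opt L) \sum_(0 <= i < size L) (f i == b)%:R * L`_i.
  rewrite exchange_big (big_nth 0) big_nat [RHS]big_nat; apply: eq_bigr => i /andP[_ iL].
  by rewrite sum_nat_eq_pred1 // f_lt.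
rewrite -[X in _ <= X%:R]subn0 -sumr_const_nat; apply: ler_sum => b _.
by rewrite -loadE; exact: valid.
Qed.

Lemma Opt_nil : Opt ([::] : seq R) = 0%N.
Proof.
rewrite /Opt; case: pselect => [pk|//]; case: ex_minnP => k _ /(_ 0%N) min_k.
apply/eqP; rewrite -leqn0 min_k //; apply/asboolP.
by exists id; split=> // b; rewrite /load big_geq.
Qed.

End Packing.

Lemma EOpt0 d (T : measurableType d) (R : realType) (P : probability T R) X :
  EOpt P X 0 = 0%E.
Proof.
by rewrite /EOpt /rand_list; under eq_integral do rewrite Opt_nil; rewrite integral_cst // mul0e.
Qed.

Section RandomList.
Context d (T : measurableType d) (R : realType) (P : probability T R).
Variables (X : nat -> T -> R) (n : nat).
Hypothesis hX : iid_items P X n.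
Hypothesis n_gt0 : (0 < n)%N.
Local Hint Resolve measurableT : core.

Lemma items_ok_rand_list m w : items_ok (rand_list X m w).
Proof. by rewrite /items_ok /rand_list all_map; apply/allP => i _; exact: hX.2.1. Qed.

Lemma sum_rand_list m w : \sum_(x <- rand_list X m w) x = \sum_(0 <= i < m) X i w.
Proof. by rewrite /rand_list big_map /index_iota subn0. Qed.

Let grid_sum k w := \sum_(0 <= i < k) grid_item X n i w.
Let q := mean P (grid_item X n 0).

Lemma grid_sum_bounds k w : (k <= n)%N ->
  grid_sum k w <= \sum_(0 <= i < k) X i w <= grid_sum k w + 1.
Proof.
move=> kn; apply/andP; split; first by apply: ler_sum => i _; case: (grid_item_bounds hX n_gt0 i w).
apply: (@le_trans _ _ (\sum_(0 <= i < k) (grid_item X n i w + n%:R^-1))).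
  by apply: ler_sum => i _; case: (grid_item_bounds hX n_gt0 i w).
rewrite big_split /= sumr_const_nat subn0 lerD2l -[n%:R^-1 *+ k]mulr_natl.
by rewrite ler_pdivrMr ?ltr0n // mul1r ler_nat.
Qed.

Lemma mean_grid_item_ge0 : 0 <= q.
Proof.
rewrite /q -(mean_cst P 0); apply: ler_mean; first exact: bounded_mfun_cst.
  exact: (bounded_mfun_grid_item hX 0).
by move=> w; case: (grid_item_bounds hX n_gt0 0 w).
Qed.

Lemma mean_grid_sum_sub_sqr k : (k <= n)%N ->
  mean P (fun w => (grid_sum k w - k%:R * q) ^+ 2) <= k%:R * q.
Proof.
move=> kn; apply: variance_partial_sum_le => [i|i w|i ik|i j ik jk ij].
- exact: (bounded_mfun_grid_item hX i).
- have [Z0 ZX _] := grid_item_bounds hX n_gt0 i w.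
  by rewrite Z0 (le_trans ZX) //; case/andP: (hX.2.1 i w).
- exact: (mean_grid_item hX i).
- by rewrite (mean_grid_itemM hX) ?(leq_trans ik) ?(leq_trans jk) // !(mean_grid_item hX).
Qed.

Lemma mean_grid_item_le_EOpt : ((n%:R * q)%:E <= EOpt P X n)%E.
Proof.
have bZ : bounded_mfun (grid_sum n).
  by apply: bounded_mfun_sum => i; exact: (bounded_mfun_grid_item hX i).
have <- : mean P (grid_sum n) = n%:R * q.
  apply: mean_partial_sum => [i | i _]; first exact: (bounded_mfun_grid_item hX i).
  exact: (mean_grid_item hX i).
rewrite -integral_mean //; apply: ge0_le_integral_nonmeasurable => w.
  by rewrite lee_fin; apply: sumr_ge0 => i _; case: (grid_item_bounds hX n_gt0 i w).
rewrite lee_fin; have /andP[le_sum _] := grid_sum_bounds w (leqnn n).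
by rewrite (le_trans le_sum) // -sum_rand_list sum_le_Opt // items_ok_rand_list.
Qed.

Lemma prefix_sum_concentration k t e : (k <= n)%N -> 0 < t -> EOpt P X n = e%:E ->
  exists2 E : set T, measurable E /\ ((1 - e / t ^+ 2)%:E <= P E)%E &
    forall w, E w -> \sum_(0 <= i < k) X i w <= k%:R / n%:R * e + t + 1.
Proof.
move=> kn t_gt0 EOptE.
have q_ge0 := mean_grid_item_ge0.
have nq_le : n%:R * q <= e by rewrite -lee_fin -EOptE mean_grid_item_le_EOpt.
have kq_le : k%:R * q <= k%:R / n%:R * e.
  by rewrite -mulrA ler_wpM2l // ler_pdivlMl ?ltr0n.
have kq_le_e : k%:R * q <= e.
  by apply: le_trans nq_le; rewrite ler_wpM2r // ler_nat.
have bZ : bounded_mfun (grid_sum k).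
  by apply: bounded_mfun_sum => i; exact: (bounded_mfun_grid_item hX i).
set Bad := grid_sum k @^-1` `[k%:R * q + t, +oo[.
have mBad : measurable Bad.
  by rewrite -[Bad]setTI; apply: bZ.1 => //; exact: measurable_itv.
have PBad : fine (P Bad) <= e / t ^+ 2.
  rewrite ler_pdivlMr ?exprn_gt0 // mulrC.
  apply: le_trans (chebyshev_mean P (k%:R * q) bZ t_gt0) _.
  exact: le_trans (mean_grid_sum_sub_sqr kn) kq_le_e.
exists (~` Bad); first split; first exact: measurableC.
  by rewrite probability_setC // -[P Bad]fineK ?fin_num_measure // -EFinB lee_fin lerB.
move=> w nBad; have /andP[_ sum_le] := grid_sum_bounds w kn.
have : grid_sum k w < k%:R * q + t.
  by rewrite ltNge; apply: contra_notN nBad => h; rewrite /Bad /preimage /= in_itv /= h.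
lra.
Qed.

Lemma nbins_prefix_concentration alg delta mu nu beta t e :
  0 < delta < 1 -> 0 <= nu -> condition_i delta mu alg -> condition_ii delta nu alg ->
  0 < beta <= 1 -> 0 < t -> EOpt P X n = e%:E ->
  exists2 E : set T, measurable E /\ ((1 - e / t ^+ 2)%:E <= P E)%E &
    forall w, E w -> (nbins alg (beta_prefix beta (rand_list X n w)))%:R
      <= mu + ((1 - delta)^-1 + nu / delta) * (beta * e + t + 1).
Proof.
move=> delta01 nu_ge0 condi condii /andP[beta_gt0 beta_le1] t_gt0 EOptE.
have e_ge0 : 0 <= e.
  by rewrite -lee_fin -EOptE; apply: integral_ge0 => w _; rewrite lee_fin.
set k := Num.truncn (beta * n%:R).
have k_le : k%:R <= beta * n%:R by rewrite truncn_le mulr_ge0 // ltW.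
have kn : (k <= n)%N.
  by rewrite -(ler_nat R) (le_trans k_le) // ler_piMl.
have [E mE sum_le] := prefix_sum_concentration kn t_gt0 EOptE.
exists E => // w Ew.
have -> : beta_prefix beta (rand_list X n w) = rand_list X k w.
  by rewrite /beta_prefix /rand_list size_map size_iota -map_take take_iota (minn_idPl kn).
apply: le_trans (nbins_le delta01 nu_ge0 condi condii (items_ok_rand_list k w)) _.
have /andP[delta_gt0 delta_lt1] := delta01.
have C_ge0 : 0 <= (1 - delta)^-1 + nu / delta.
  by apply: addr_ge0; rewrite ?invr_ge0 ?subr_ge0 ?divr_ge0 // ltW.
rewrite lerD2l ler_wpM2l // sum_rand_list.
apply: le_trans (sum_le _ Ew) _; rewrite -!addrA lerD2r ler_wpM2r //.
by rewrite ler_pdivrMr ?ltr0n.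
Qed.

End RandomList.

Lemma packing_coef_le (R : realFieldType) (delta nu : R) : 0 < delta < 1 -> 1 <= nu ->
  (1 - delta)^-1 + nu / delta <= 2 * nu / (delta * (1 - delta)).
Proof.
move=> /andP[delta_gt0 delta_lt1] nu_ge1.
have delta'_gt0 : 0 < 1 - delta by rewrite subr_gt0.
rewrite ler_pdivlMr ?mulr_gt0 //.
have -> : ((1 - delta)^-1 + nu / delta) * (delta * (1 - delta)) = delta + nu * (1 - delta).
  by field; rewrite !gt_eqF.
nra.
Qed.

Lemma linear_bound_threshold (R : realFieldType) (mu C K beta eps eta : R) :
  0 <= mu -> 0 < C -> C <= K -> 0 <= beta -> 0 < eps -> 0 < eta -> C * eta = eps / 2 ->
  exists2 M : R, 0 < M & forall e, M <= e ->
    e / (eta * e) ^+ 2 <= eps /\ mu + C * (beta * e + eta * e + 1) <= (beta * K + eps) * e.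
Proof.
move=> mu_ge0 C_gt0 C_le beta_ge0 eps_gt0 eta_gt0 C_eta.
set M1 := 2 * (mu + C) / eps; set M2 := (eta ^+ 2 * eps)^-1.
have M1_gt0 : 0 < M1 by rewrite divr_gt0 ?mulr_gt0 //; lra.
have M2_gt0 : 0 < M2 by rewrite invr_gt0 mulr_gt0 ?exprn_gt0.
exists (M1 + M2) => [|e M_le]; first exact: addr_gt0.
have e_gt0 : 0 < e by lra.
split.
  have -> : e / (eta * e) ^+ 2 = M2 / e * eps by rewrite /M2; field; rewrite !gt_eqF.
  by rewrite -[leRHS]mul1r ler_wpM2r ?(ltW eps_gt0) // ler_pdivrMr // mul1r; lra.
have mu_C : mu + C <= eps / 2 * e.
  have : M1 <= e by lra.
  by rewrite /M1 ler_pdivrMr //; lra.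
have C_beta : C * (beta * e) <= K * (beta * e) by rewrite ler_wpM2r // mulr_ge0 // ltW.
rewrite (_ : C * _ = C * (beta * e) + C * eta * e + C); last by ring.
rewrite C_eta; lra.
Qed.

Theorem lemmaC1 (R : realType) (delta beta mu nu : R)
    (alg : seq R -> nat -> nat) :
  0 < delta < 1 / 2 -> 0 < beta <= 1 -> 0 <= mu -> 1 <= nu ->
  online_algorithm alg -> condition_i delta mu alg -> condition_ii delta nu alg ->
  forall eps : R, 0 < eps ->
  exists M : R,
    forall (d : measure_display) (T : measurableType d) (P : probability T R)
           (X : nat -> T -> R) (n : nat),
      iid_items P X n ->
      (M%:E <= EOpt P X n)%E ->
      exists E : set T,
        measurable E /\ ((1 - eps)%:E <= P E)%E /\
        forall w, E w ->
          (((nbins alg (beta_prefix beta (rand_list X n w)))%:R)%:E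
           <= (2 * beta * nu / (delta * (1 - delta)) + eps)%:E * EOpt P X n)%E.
Proof.
move=> /andP[delta_gt0 delta_lt] beta01 mu_ge0 nu_ge1 _ condi condii eps eps_gt0.
have delta01 : 0 < delta < 1 by rewrite delta_gt0; lra.
have [beta_gt0 _] := andP beta01.
set C := (1 - delta)^-1 + nu / delta.
have C_gt0 : 0 < C by rewrite addr_gt0 ?invr_gt0 ?divr_gt0 ?subr_gt0; lra.
set eta := eps / (2 * C).
have eta_gt0 : 0 < eta by rewrite divr_gt0 ?mulr_gt0.
have C_eta : C * eta = eps / 2 by rewrite /eta; field; rewrite gt_eqF.
have [M M_gt0 M_ok] := linear_bound_threshold mu_ge0 C_gt0
  (packing_coef_le delta01 nu_ge1) (ltW beta_gt0) eps_gt0 eta_gt0 C_eta.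
exists M => dT T P X n hX.
case: n hX => [|n] hX; first by rewrite EOpt0 lee_fin; lra.
case EOptE: (EOpt P X n.+1) => [e| |]; rewrite ?lee_fin => M_le; last first.
- by move: M_le; rewrite leNgt ltNyr.
- exists setT; split=> //; split; first by rewrite probability_setT lee_fin; lra.
  by move=> w _; rewrite mulry gtr0_sg ?mul1e ?leey // addr_gt0 ?divr_gt0 ?mulr_gt0 //; lra.
have [tail_le bound_le] := M_ok e M_le.
have [E [mE PE] nbins_le] := nbins_prefix_concentration hX (ltn0Sn n) delta01
  (le_trans ler01 nu_ge1) condi condii beta01 (mulr_gt0 eta_gt0 (lt_le_trans M_gt0 M_le)) EOptE.
exists E; split=> //; split; first by apply: le_trans PE; rewrite lee_fin lerB.
move=> w Ew; rewrite -EFinM lee_fin; apply: le_trans (nbins_le w Ew) _.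
rewrite (_ : 2 * beta * nu / _ = beta * (2 * nu / (delta * (1 - delta)))); last by ring.
exact: bound_le.
Qed.
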